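(* Let $p>p_0\ge1$, $f_n\in C[0,1]^p$, and suppose there exist $\widetilde f_n\in C[0,1]^{p_0}$ and $\eta_n>0$ with $\sup_{\mathbf{x}\in[0,1]^p}|f_n(\mathbf{x})-\widetilde f_n(x_1,\ldots,x_{p_0})|<\eta_n$, and a positive constant $\tau$ with $|\int_{[0,1]^p}x_jf_n(\mathbf{x})d\mathbf{x}-\frac12\int_{[0,1]^p}f_n(\mathbf{x})d\mathbf{x}|>\tau$ for each $j=1,\ldots,p_0$. Then for every $\mathcal{A}\subset Z_p$, $$\beta_{Z_p}(\mathcal{A})_j=12\left(\int_{[0,1]^p}x_jf_n(\mathbf{x})d\mathbf{x}-\frac12\int_{[0,1]^p}f_n(\mathbf{x})d\mathbf{x}\right),\quad j\in\mathcal{A},$$ $$\beta_0(\mathcal{A})=\int_{[0,1]^p}f_n(\mathbf{x})d\mathbf{x}-\sum_{j\in\mathcal{A}}\beta_{Z_p}(\mathcal{A})_j/2.$$ Furthermore, $|\beta_{Z_p}(\mathcal{A})_j|>12\tau$ for $j\in\mathcal{A}\cap\mathcal{A}_0$ and $|\beta_{Z_p}(\mathcal{A})_j|<12\eta_n$ for $j\in\mathcal{A}\setminus\mathcal{A}_0$.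
   Context: $Z_d=\{1,\ldots,d\}$, $\mathcal{A}_0=Z_{p_0}$. For $\mathcal{A}\subset Z_p$ and $\mathbf{x}\in[0,1]^p$, $\mathbf{x}_{\mathcal{A}}$ is the subvector of coordinates in $\mathcal{A}$. $(\beta_0(\mathcal{A}),\boldsymbol\beta(\mathcal{A})')'\in\mathbb{R}\times\mathbb{R}^{|\mathcal{A}|}$ minimizes $\int_{[0,1]^p}[f_n(\mathbf{x})-\phi_0-\boldsymbol\phi'\mathbf{x}_{\mathcal{A}}]^2d\mathbf{x}$ over $(\phi_0,\boldsymbol\phi)$, and $\boldsymbol\beta_{Z_p}(\mathcal{A})=(\beta_{Z_p}(\mathcal{A})_1,\ldots,\beta_{Z_p}(\mathcal{A})_p)'$ is the $p$-vector whose coordinates indexed by $\mathcal{A}$ equal $\boldsymbol\beta(\mathcal{A})$ and whose other coordinates are $0$. *)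

From HB Require Import structures.
From mathcomp Require Import all_boot all_order all_algebra.
From mathcomp Require Import all_classical all_reals all_analysis.
Set Implicit Arguments. Unset Strict Implicit. Unset Printing Implicit Defensive.
Import Order.TTheory GRing.Theory Num.Theory.
Import numFieldNormedType.Exports.
Local Open Scope classical_set_scope.
Local Open Scope ring_scope.

Section defs.
Variable R : realType.

(* Points of [0,1]^p are row vectors x : 'rV[R]_p; coordinate j (0-based) is x ord0 j. *)
Definition cube (p : nat) : set 'rV[R]_p :=
  [set x | forall i : 'I_p, 0 <= x ord0 i <= 1].

Definition vcons (n : nat) (t : R) (x : 'rV[R]_n) : 'rV[R]_n.+1 :=
  \row_(i < n.+1) (if unlift ord0 i is Some j then x ord0 j else t).

(* Integral over [0,1]^p, written as the iterated Lebesgue integral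
   \int_0^1 ... \int_0^1 F(x_1,...,x_p) dx_p ... dx_1. *)
Fixpoint cube_int (p : nat) : ('rV[R]_p -> R) -> R :=
  match p with
  | 0 => fun F => F 0
  | n.+1 => fun F =>
      Rintegral (@lebesgue_measure R) `[0, 1]%classic
        (fun t => cube_int (fun x : 'rV[R]_n => F (vcons t x)))
  end.

Definition proj_first (p0 p : nat) (h : (p0 <= p)%N) (x : 'rV[R]_p) : 'rV[R]_p0 :=
  \row_(j < p0) x ord0 (widen_ord h j).

(* a p-vector whose coordinates outside A vanish (an element of R^{|A|}
   embedded in R^p, i.e. beta_{Z_p}(A)) *)
Definition supported_on (p : nat) (A : {set 'I_p}) (c : 'rV[R]_p) : Prop :=
  forall j : 'I_p, j \notin A -> c ord0 j = 0.

Definition LS_obj (p : nat) (f : 'rV[R]_p -> R) (A : {set 'I_p})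
    (c0 : R) (c : 'rV[R]_p) : R :=
  cube_int (fun x => (f x - c0 - \sum_(j in A) c ord0 j * x ord0 j) ^+ 2).

(* (b0, b) = (beta_0(A), beta_{Z_p}(A)) : a minimizer of LS_obj *)
Definition is_LS_min (p : nat) (f : 'rV[R]_p -> R) (A : {set 'I_p})
    (b0 : R) (b : 'rV[R]_p) : Prop :=
  supported_on A b /\
  forall (c0 : R) (c : 'rV[R]_p), supported_on A c -> LS_obj f A b0 b <= LS_obj f A c0 c.

End defs.
Arguments cube {R} p.
Arguments cube_int {R p} F.

From HB Require Import structures.
From mathcomp Require Import all_boot all_order all_algebra.
From mathcomp Require Import all_classical all_reals all_analysis.
From mathcomp Require Import ring lra.
Import Order.TTheory GRing.Theory Num.Theory.
Import numFieldNormedType.Exports.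
Local Open Scope classical_set_scope.
Local Open Scope ring_scope.
Set Implicit Arguments. Unset Strict Implicit. Unset Printing Implicit Defensive.

(* With ctr t := t - 1/2, the centred coordinates ctr x_j satisfy
   \int ctr x_j = 0, \int ctr x_j * ctr x_k = 0 for j <> k and \int (ctr x_j)^2 = 1/12
   over the unit cube.  Writing sum_j c_j x_j = sum_j c_j ctr x_j + sum_j c_j / 2 and
   cov f j := \int ctr x_j * f x = \int x_j f x - (\int f) / 2, the least-squares
   objective becomes
     LS(c0, c) = LS_min + (c0 + sum_(j in A) c_j / 2 - \int f)^2
                        + sum_(j in A) (c_j - 12 cov f j)^2 / 12,
   so the minimisers are exactly c_j = 12 cov f j, c0 = \int f - sum_j c_j / 2.
   For j >= p0, g := ft o proj_first does not depend on x_j, whence \int ctr x_j * g = 0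
   and |cov f j| = |\int ctr x_j * (f - g)| <= sup |f - g| < eta.
   The cube integral is an iterated integral; on uniformly continuous functions the
   partial integrals are continuous in the outer variable, hence integrable, and this
   makes the iterated integral additive, homogeneous and monotone. *)

Section cube_integral.
Variable R : realType.
Implicit Types (n : nat) (t : R).

Local Notation I01 := `[(0:R), 1]%classic.
Local Notation mu := (@lebesgue_measure R).

Lemma vcons0 n t (x : 'rV[R]_n) : vcons t x ord0 ord0 = t.
Proof. by rewrite /vcons mxE unlift_none. Qed.

Lemma vconsS n t (x : 'rV[R]_n) j : vcons t x ord0 (lift ord0 j) = x ord0 j.
Proof. by rewrite /vcons mxE liftK. Qed.

Lemma in_I01 t : (t \in I01) = (0 <= t <= 1).
Proof. by apply/idP/idP; rewrite inE /= in_itv. Qed.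

Lemma cube_vcons n t (x : 'rV[R]_n) : 0 <= t <= 1 -> cube n x -> cube n.+1 (vcons t x).
Proof.
move=> t01 xc i; case: (unliftP ord0 i) => [j ->|->]; first by rewrite vconsS.
by rewrite vcons0.
Qed.

Lemma cube_proj_first p0 p (h : (p0 <= p)%N) (x : 'rV[R]_p) :
  cube p x -> cube p0 (proj_first h x).
Proof. by move=> xc i; rewrite mxE. Qed.

Definition ucont_on_cube n (F : 'rV[R]_n -> R) := forall e, 0 < e -> exists2 d, 0 < d &
  forall x y, cube n x -> cube n y ->
    (forall i, `|x ord0 i - y ord0 i| < d) -> `|F x - F y| < e.

Definition bounded_on_cube n (F : 'rV[R]_n -> R) :=
  exists M, forall x, cube n x -> `|F x| <= M.

Definition regular n (F : 'rV[R]_n -> R) := ucont_on_cube F /\ bounded_on_cube F.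

Lemma regular_cst n c : regular (fun _ : 'rV[R]_n => c).
Proof.
split; last by exists `|c|.
by move=> e e0; exists 1 => // *; rewrite subrr normr0.
Qed.

Lemma regular_coord n (j : 'I_n) : regular (fun x : 'rV[R]_n => x ord0 j).
Proof.
split; last by exists 1 => x /(_ j) /andP[x0 x1]; rewrite ger0_norm.
by move=> e e0; exists e.
Qed.

Lemma regularD n (F G : 'rV[R]_n -> R) :
  regular F -> regular G -> regular (fun x => F x + G x).
Proof.
move=> [ucF [M FM]] [ucG [N GN]]; split; last first.
  by exists (M + N) => x xc; rewrite (le_trans (ler_normD _ _)) ?lerD ?FM ?GN.
move=> e e0; have e20 : 0 < e / 2 by rewrite divr_gt0.
have [d d0 Fd] := ucF _ e20; have [d' d'0 Gd'] := ucG _ e20.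
exists (Num.min d d'); first by rewrite lt_min d0 d'0.
move=> x y xc yc xy.
have lt_min_l i : `|x ord0 i - y ord0 i| < d by have := xy i; rewrite lt_min => /andP[].
have lt_min_r i : `|x ord0 i - y ord0 i| < d' by have := xy i; rewrite lt_min => /andP[].
rewrite opprD addrACA (le_lt_trans (ler_normD _ _)) // [e]splitr.
by rewrite ltrD ?Fd ?Gd'.
Qed.

Lemma regularM n (F G : 'rV[R]_n -> R) :
  regular F -> regular G -> regular (fun x => F x * G x).
Proof.
move=> [ucF [M FM]] [ucG [N GN]].
have {}FM x : cube n x -> `|F x| <= `|M| by move=> xc; rewrite (le_trans (FM x xc)) ?ler_norm.
have {}GN x : cube n x -> `|G x| <= `|N| by move=> xc; rewrite (le_trans (GN x xc)) ?ler_norm.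
split; last by exists (`|M| * `|N|) => x xc; rewrite normrM ler_pM ?FM ?GN.
move=> e e0; set K := `|M| + `|N| + 1.
have K0 : 0 < K by rewrite /K ltr_wpDl ?addr_ge0.
have eK0 : 0 < e / K by rewrite divr_gt0.
have [d d0 Fd] := ucF _ eK0; have [d' d'0 Gd'] := ucG _ eK0.
exists (Num.min d d'); first by rewrite lt_min d0 d'0.
move=> x y xc yc xy.
have lt_min_l i : `|x ord0 i - y ord0 i| < d by have := xy i; rewrite lt_min => /andP[].
have lt_min_r i : `|x ord0 i - y ord0 i| < d' by have := xy i; rewrite lt_min => /andP[].
have dF := Fd x y xc yc lt_min_l; have dG := Gd' x y xc yc lt_min_r.
have -> : F x * G x - F y * G y = (F x - F y) * G x + F y * (G x - G y) by ring.
rewrite (le_lt_trans (ler_normD _ _)) // !normrM.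
have eKK : e / K * K = e by rewrite divfK ?gt_eqF.
have := GN x xc; have := FM y yc; have := normr_ge0 (F x - F y).
have := normr_ge0 (G x - G y); have := normr_ge0 M; have := normr_ge0 N.
move: eKK dF dG; rewrite /K; nra.
Qed.

Lemma regularB n (F G : 'rV[R]_n -> R) :
  regular F -> regular G -> regular (fun x => F x - G x).
Proof.
move=> rF rG; have := regularD rF (regularM (regular_cst n (-1)) rG).
by congr regular; apply: funext => x; ring.
Qed.

Lemma regular_sum n (I : Type) (s : seq I) (P : pred I) (Fs : I -> 'rV[R]_n -> R) :
  (forall i, regular (Fs i)) -> regular (fun x => \sum_(i <- s | P i) Fs i x).
Proof.
move=> rFs; elim: s => [|i s IH].
  by under [fun x => _]funext do rewrite big_nil; exact: regular_cst.
under [fun x => _]funext do rewrite big_cons.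
by case: (P i) => //; exact: regularD.
Qed.

Lemma regular_vcons n t (F : 'rV[R]_n.+1 -> R) :
  0 <= t <= 1 -> regular F -> regular (fun x => F (vcons t x)).
Proof.
move=> t01 [ucF [M FM]]; split; last by exists M => x xc; exact: FM (cube_vcons t01 xc).
move=> e e0; have [d d0 Fd] := ucF e e0; exists d => // x y xc yc xy.
apply: Fd; try exact: cube_vcons.
move=> i; case: (unliftP ord0 i) => [j ->|->]; last by rewrite !vcons0 subrr normr0.
by rewrite !vconsS; exact: xy.
Qed.

Lemma regular_proj_first p0 p (h : (p0 <= p)%N) (G : 'rV[R]_p0 -> R) :
  regular G -> regular (fun x : 'rV[R]_p => G (proj_first h x)).
Proof.
move=> [ucG [M GM]]; split; last by exists M => x xc; exact: GM (cube_proj_first h xc).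
move=> e e0; have [d d0 Gd] := ucG e e0; exists d => // x y xc yc xy.
apply: Gd; try exact: cube_proj_first.
by move=> i; rewrite !mxE; exact: xy.
Qed.

Lemma rV_ballP n (z y : 'rV[R]_n) d :
  0 < d -> ball z d y <-> forall i, `|z ord0 i - y ord0 i| < d.
Proof.
move=> d0; split => [[_ zy] i | zy]; first exact: zy.
by split => // i j; rewrite [i]ord1; exact: zy.
Qed.

Lemma compact_cube n : compact (cube n : set 'rV[R]_n).
Proof. exact: (@rV_compact R n (fun=> I01) (fun=> @segment_compact R 0 1)). Qed.

Lemma continuous_on_cube_coord n (F : 'rV[R]_n -> R) : {within cube n, continuous F} ->
  forall z, cube n z -> forall e, 0 < e -> exists2 d, 0 < d &
    forall y, cube n y -> (forall i, `|z ord0 i - y ord0 i| < d) -> `|F z - F y| < e.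
Proof.
move=> /subspace_continuousP cF z zc e e0.
have /cvgrPdist_lt /(_ e e0) := cF z zc; rewrite /within /= => /nbhs_ballP [d d0 Fd].
by exists d => // y yc zy; apply: Fd => //; exact/rV_ballP.
Qed.

Lemma continuous_ucont_on_cube n (F : 'rV[R]_n -> R) :
  {within cube n, continuous F} -> ucont_on_cube F.
Proof.
move=> cF e e0; apply: contrapT => noD.
have bad k : exists xy : 'rV[R]_n * 'rV[R]_n, [/\ cube n xy.1, cube n xy.2,
    forall i, `|xy.1 ord0 i - xy.2 ord0 i| < k.+1%:R^-1 & e <= `|F xy.1 - F xy.2|].
  apply: contrapT => noxy; apply: noD; exists k.+1%:R^-1 => // x y xc yc xy.
  by rewrite ltNge; apply/negP => Fxy; apply: noxy; exists (x, y).
have [X Xbad] := choice bad.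
have X1_cube : \forall k \near \oo, cube n (X k).1 by apply: nearW => k; case: (Xbad k).
have [z [zc zX]] := @compact_cube n ((fun k => (X k).1) @ \oo) _ X1_cube.
have e20 : 0 < e / 2 by rewrite divr_gt0.
have [d d0 Fd] := continuous_on_cube_coord cF zc e20.
have d20 : 0 < d / 2 by rewrite divr_gt0.
have [_ [[k kd ->] zXk]] := zX [set v | exists2 k : nat, 2 / d < k%:R & v = (X k).1]
  (ball z (d / 2)) (filterS (fun k kd => ex_intro2 _ _ k kd erefl) (nbhs_infty_gtr (2 / d)))
  (nbhsx_ballx z _ d20).
case: (Xbad k) => X1c X2c X12 FX12.
have k_d2 : k.+1%:R^-1 < d / 2.
  rewrite -[d / 2]invrK ltf_pV2 ?posrE ?invr_gt0 // invf_div.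
  by rewrite (lt_trans kd) // ltr_nat.
have zX1 := (rV_ballP _ _ d20).1 zXk.
have FzX1 : `|F z - F (X k).1| < e / 2 by apply: Fd => // i; have := zX1 i; lra.
have FzX2 : `|F z - F (X k).2| < e / 2.
  apply: Fd => // i; rewrite (le_lt_trans (ler_distD ((X k).1 ord0 i) _ _)) // [d]splitr.
  by rewrite ltrD // (lt_trans (X12 i)).
have := ler_distD (F z) (F (X k).1) (F (X k).2); rewrite distrC in FzX1.
by move: FX12 FzX1 FzX2; lra.
Qed.

Lemma continuous_regular n (F : 'rV[R]_n -> R) :
  {within cube n, continuous F} -> regular F.
Proof.
move=> cF; split; first exact: continuous_ucont_on_cube.
have [M [_ FM]] := compact_bounded (continuous_compact cF (@compact_cube n)).
by exists (M + 1) => x xc; apply: (FM (M + 1)); [rewrite ltrDl | exists x].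
Qed.

Lemma Rintegral01_cst c : \int[mu]_(t in I01) c = c.
Proof.
rewrite Rintegral_cst; last exact: measurable_itv.
have := lebesgue_measure_itv `[(0:R), 1]; rewrite /= lte_fin ltr01 /= => ->.
by rewrite /= subr0 mulr1.
Qed.

Lemma cube_int_cst n c : cube_int (fun _ : 'rV[R]_n => c) = c.
Proof.
elim: n => [//|n IH] /=.
by under eq_Rintegral do rewrite IH; exact: Rintegral01_cst.
Qed.

(* Bundled because continuity of the partial integrals in dimension n.+1 needs
   both properties in dimension n. *)
Definition cube_int_additive_monotone n :=
  (forall F G : 'rV[R]_n -> R, regular F -> regular G ->
     cube_int (fun x => F x + G x) = cube_int F + cube_int G) /\
  (forall F G : 'rV[R]_n -> R, regular F -> regular G ->
     (forall x, cube n x -> F x <= G x) -> cube_int F <= cube_int G).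

Lemma cube_int_section_continuous n (F : 'rV[R]_n.+1 -> R) :
  cube_int_additive_monotone n -> regular F ->
  {within I01, continuous (fun t => cube_int (fun x => F (vcons t x)))}.
Proof.
move=> [cube_intD le_cube_int] rF; apply/subspace_continuousP => t t01.
apply/cvgrPdist_lt => e e0; have e20 : 0 < e / 2 by rewrite divr_gt0.
have [d d0 Fd] := rF.1 _ e20.
apply/nbhs_ballP; exists d => // s ts s01.
move: t01 s01; rewrite /= !in_itv /= => t01 s01.
have rFs : regular (fun x => F (vcons s x)) by exact: regular_vcons.
have Fts x : cube n x -> `|F (vcons t x) - F (vcons s x)| < e / 2.
  move=> xc; apply: Fd; try exact: cube_vcons.
  by move=> i; case: (unliftP ord0 i) => [j ->|->]; rewrite ?vconsS ?vcons0 ?subrr ?normr0.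
have shift c : cube_int (fun x => F (vcons s x) + c) = cube_int (fun x => F (vcons s x)) + c.
  by rewrite cube_intD ?cube_int_cst //; exact: regular_cst.
suff : `|cube_int (fun x => F (vcons t x)) - cube_int (fun x => F (vcons s x))| <= e / 2.
  by rewrite distrC; lra.
rewrite ler_distl -!shift; apply/andP; split; apply: le_cube_int;
  try exact: regularD rFs (regular_cst _ _); try exact: regular_vcons.
all: by move=> x /Fts /ltW; rewrite ler_distl => /andP[].
Qed.

Lemma cube_int_section_integrable n (F : 'rV[R]_n.+1 -> R) :
  cube_int_additive_monotone n -> regular F ->
  mu.-integrable I01 (EFin \o fun t => cube_int (fun x => F (vcons t x))).
Proof.
move=> P rF; apply: continuous_compact_integrable; first exact: segment_compact.
exact: cube_int_section_continuous.
Qed.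

Lemma cube_int_additive_monotoneP n : cube_int_additive_monotone n.
Proof.
elim: n => [|n IH]; first by split => //= F G _ _; apply => -[].
have int_section F := @cube_int_section_integrable n F IH.
split => [F G rF rG | F G rF rG FG] /=.
  rewrite -RintegralD; [|exact: measurable_itv|exact: int_section|exact: int_section].
  apply: eq_Rintegral => t; rewrite in_I01 => t01.
  by apply: IH.1; exact: regular_vcons.
apply: le_Rintegral; [exact: measurable_itv|exact: int_section|exact: int_section|].
move=> t /= /[!in_itv] /= t01; apply: IH.2; try exact: regular_vcons.
by move=> x xc; apply: FG; exact: cube_vcons.
Qed.

Lemma cube_intD n (F G : 'rV[R]_n -> R) : regular F -> regular G ->
  cube_int (fun x => F x + G x) = cube_int F + cube_int G.
Proof. exact: (cube_int_additive_monotoneP n).1. Qed.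

Lemma le_cube_int n (F G : 'rV[R]_n -> R) : regular F -> regular G ->
  (forall x, cube n x -> F x <= G x) -> cube_int F <= cube_int G.
Proof. exact: (cube_int_additive_monotoneP n).2. Qed.

Lemma cube_intZ n c (F : 'rV[R]_n -> R) : regular F ->
  cube_int (fun x => c * F x) = c * cube_int F.
Proof.
elim: n F => [//|n IH] F rF /=.
have int_section := cube_int_section_integrable (cube_int_additive_monotoneP n) rF.
rewrite -RintegralZl; [|exact: measurable_itv|exact: int_section].
apply: eq_Rintegral => t; rewrite in_I01 => t01.
by apply: IH; exact: regular_vcons.
Qed.

Lemma cube_intB n (F G : 'rV[R]_n -> R) : regular F -> regular G ->
  cube_int (fun x => F x - G x) = cube_int F - cube_int G.
Proof.
move=> rF rG; have rNG := regularM (regular_cst n (-1)) rG.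
transitivity (cube_int (fun x => F x + -1 * G x)).
  by congr cube_int; apply: funext => x; ring.
by rewrite cube_intD // cube_intZ // mulN1r.
Qed.

Lemma cube_int_sum n (I : Type) (s : seq I) (P : pred I) (Fs : I -> 'rV[R]_n -> R) :
  (forall i, regular (Fs i)) ->
  cube_int (fun x => \sum_(i <- s | P i) Fs i x) = \sum_(i <- s | P i) cube_int (Fs i).
Proof.
move=> rFs; elim: s => [|i s IH].
  by under [fun x => _]funext do rewrite big_nil; rewrite big_nil cube_int_cst.
under [fun x => _]funext do rewrite big_cons.
rewrite big_cons; case: (P i) => //.
by rewrite cube_intD ?IH //; exact: regular_sum.
Qed.

Lemma le_norm_cube_int n (F : 'rV[R]_n -> R) M : regular F ->
  (forall x, cube n x -> `|F x| <= M) -> `|cube_int F| <= M.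
Proof.
move=> rF FM; rewrite ler_norml -[-M](cube_int_cst n) -[in _ <= M](cube_int_cst n M).
apply/andP; split; apply: le_cube_int => //; try exact: regular_cst.
all: by move=> x /FM; rewrite ler_norml => /andP[].
Qed.

Lemma continuous_integrable01 (g : R -> R) : continuous g -> mu.-integrable I01 (EFin \o g).
Proof.
move=> cg; apply: continuous_compact_integrable; first exact: segment_compact.
exact: continuous_subspaceT.
Qed.

Lemma integrable01_onemXn k : mu.-integrable I01 (EFin \o fun t => (1 - t) ^+ k).
Proof. by apply: continuous_integrable01 => t; exact: continuous_onemXn. Qed.

Lemma integrable01_onemXnZ c k : mu.-integrable I01 (EFin \o fun t => c * (1 - t) ^+ k).
Proof.
apply: continuous_integrable01 => t.
by apply: cvgM; [exact: cvg_cst | exact: continuous_onemXn].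
Qed.

Lemma Rintegral01_onemXnZ c k : \int[mu]_(t in I01) (c * (1 - t) ^+ k) = c / k.+1%:R.
Proof.
rewrite RintegralZl; [|exact: measurable_itv|exact: integrable01_onemXn].
by have := @Rintegral_onemXn R k; rewrite /unstable.onem => ->.
Qed.

Definition ctr t := t - 2^-1.

Lemma Rintegral01_ctr : \int[mu]_(t in I01) ctr t = 0.
Proof.
transitivity (\int[mu]_(t in I01) (2^-1 * (1 - t) ^+ 0 + (-1) * (1 - t) ^+ 1)).
  by apply: eq_Rintegral => t _; rewrite /ctr expr0 expr1; field.
rewrite RintegralD ?Rintegral01_onemXnZ; last 3 first.
- exact: measurable_itv.
- exact: integrable01_onemXnZ.
- exact: integrable01_onemXnZ.
by field.
Qed.

Lemma Rintegral01_ctr2 : \int[mu]_(t in I01) (ctr t ^+ 2) = 12^-1.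
Proof.
transitivity (\int[mu]_(t in I01)
    (1 * (1 - t) ^+ 2 + ((-1) * (1 - t) ^+ 1 + 4^-1 * (1 - t) ^+ 0))).
  by apply: eq_Rintegral => t _; rewrite /ctr expr0 expr1; field.
have int_tail :
    mu.-integrable I01 (EFin \o fun t => (-1) * (1 - t) ^+ 1 + 4^-1 * (1 - t) ^+ 0).
  apply: continuous_integrable01 => t.
  by apply: cvgD; apply: cvgM; (exact: cvg_cst || exact: continuous_onemXn).
rewrite RintegralD; [|exact: measurable_itv|exact: integrable01_onemXnZ|exact: int_tail].
rewrite RintegralD; [|exact: measurable_itv|exact: integrable01_onemXnZ..].
by rewrite !Rintegral01_onemXnZ; field.
Qed.

Lemma continuous_ctr : continuous ctr.
Proof. by move=> t; apply: cvgB; [exact: cvg_id | exact: cvg_cst]. Qed.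

Lemma regular_ctr n (j : 'I_n) : regular (fun x : 'rV[R]_n => ctr (x ord0 j)).
Proof. exact: regularB (regular_coord j) (regular_cst _ _). Qed.

Lemma cube_int_coord n (phi : R -> R) (j : 'I_n) :
  cube_int (fun x => phi (x ord0 j)) = \int[mu]_(t in I01) phi t.
Proof.
elim: n j => [|n IH] j; first by case: j.
case: (unliftP ord0 j) => [k ->|->] /=.
  under eq_Rintegral do under [fun x => _]funext do rewrite vconsS.
  by under eq_Rintegral do rewrite IH; rewrite Rintegral01_cst.
apply: eq_Rintegral => t _.
by under [fun x => _]funext do rewrite vcons0; rewrite cube_int_cst.
Qed.

Lemma cube_int_ctrM_indep n (G : 'rV[R]_n -> R) (j : 'I_n) : regular G ->
  (forall x y : 'rV[R]_n, (forall i, i != j -> x ord0 i = y ord0 i) -> G x = G y) ->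
  cube_int (fun x => ctr (x ord0 j) * G x) = 0.
Proof.
elim: n G j => [|n IH] G j rG; first by case: j.
case: (unliftP ord0 j) => [k ->|->] Gj /=.
  rewrite -[RHS](Rintegral01_cst 0); apply: eq_Rintegral => t; rewrite in_I01 => t01.
  under [fun x => _]funext do rewrite vconsS.
  apply: IH; first exact: regular_vcons.
  move=> x y xy; apply: Gj => i; case: (unliftP ord0 i) => [i' ->|->]; rewrite ?vcons0 //.
  by rewrite (inj_eq lift_inj) !vconsS; exact: xy.
set c := cube_int (fun x => G (vcons 0 x)).
transitivity (\int[mu]_(t in I01) (ctr t * c)); last first.
  rewrite RintegralZr; [|exact: measurable_itv|exact: continuous_integrable01 continuous_ctr].
  by rewrite Rintegral01_ctr mul0r.
apply: eq_Rintegral => t; rewrite in_I01 => t01.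
have Gt x : G (vcons t x) = G (vcons 0 x).
  apply: Gj => i; case: (unliftP ord0 i) => [i' ->|->]; last by rewrite eqxx.
  by rewrite !vconsS.
under [fun x => _]funext do rewrite vcons0 Gt.
by rewrite cube_intZ //; apply: regular_vcons; rewrite ?lexx ?ler01.
Qed.

Lemma cube_int_ctr n (j : 'I_n) : cube_int (fun x => ctr (x ord0 j)) = 0.
Proof. by rewrite cube_int_coord Rintegral01_ctr. Qed.

Lemma cube_int_ctr2 n (j : 'I_n) :
  cube_int (fun x => ctr (x ord0 j) * ctr (x ord0 j)) = 12^-1.
Proof.
rewrite (cube_int_coord (fun t => ctr t * ctr t)) -Rintegral01_ctr2.
by apply: eq_Rintegral => t _; rewrite expr2.
Qed.

Lemma cube_int_ctrM n (j k : 'I_n) : j != k ->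
  cube_int (fun x => ctr (x ord0 j) * ctr (x ord0 k)) = 0.
Proof.
move=> jk; apply: cube_int_ctrM_indep; first exact: regular_ctr.
by move=> x y xy; rewrite xy // eq_sym.
Qed.

Lemma le_norm_cube_int_ctrM n (j : 'I_n) (H : 'rV[R]_n -> R) M : regular H ->
  (forall x, cube n x -> `|H x| <= M) -> `|cube_int (fun x => ctr (x ord0 j) * H x)| <= M.
Proof.
move=> rH HM; apply: le_norm_cube_int; first exact: regularM (regular_ctr j) rH.
move=> x xc; rewrite normrM (le_trans _ (HM x xc)) // ler_piMl //.
by have /andP[x0 x1] := xc j; rewrite /ctr ler_norml; apply/andP; split; lra.
Qed.

Definition cov n (f : 'rV[R]_n -> R) (j : 'I_n) := cube_int (fun x => ctr (x ord0 j) * f x).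

Lemma covE n (f : 'rV[R]_n -> R) (j : 'I_n) : regular f ->
  cov f j = cube_int (fun x => x ord0 j * f x) - cube_int f / 2.
Proof.
move=> rf; have rxf := regularM (regular_coord j) rf.
transitivity (cube_int (fun x => x ord0 j * f x - 2^-1 * f x)).
  by congr cube_int; apply: funext => x; rewrite /ctr; ring.
by rewrite cube_intB ?cube_intZ 1?mulrC //; exact: regularM (regular_cst _ _) rf.
Qed.

Lemma le_norm_cov_indep n (f g : 'rV[R]_n -> R) (j : 'I_n) M : regular f -> regular g ->
  (forall x y : 'rV[R]_n, (forall i, i != j -> x ord0 i = y ord0 i) -> g x = g y) ->
  (forall x, cube n x -> `|f x - g x| <= M) -> `|cov f j| <= M.
Proof.
move=> rf rg gj fgM; have rctr := regular_ctr j.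
have -> : cov f j = cube_int (fun x => ctr (x ord0 j) * (f x - g x)).
  under [fun x => ctr _ * (_ - _)]funext do rewrite mulrBr.
  rewrite cube_intB; [|exact: regularM rctr rf|exact: regularM rctr rg].
  by rewrite (cube_int_ctrM_indep rg gj) subr0.
exact: le_norm_cube_int_ctrM (regularB rf rg) fgM.
Qed.

Lemma le_sup_norm_cube n (h : 'rV[R]_n -> R) x : bounded_on_cube h -> cube n x ->
  `|h x| <= sup [set `|h y| | y in cube n].
Proof.
by move=> [M hM] xc; apply: ub_le_sup; [exists M => _ [y yc <-]; exact: hM | exists x].
Qed.

Ltac regular_tac := repeat first
  [ assumption | exact: regular_cst | exact: regular_coord | exact: regular_ctr
  | apply: regularD | apply: regularM | apply: regularB | apply: regular_sum => ? ].

Section least_squares.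
Variables (n : nat) (f : 'rV[R]_n -> R) (A : {set 'I_n}).
Hypothesis rf : regular f.

Local Notation m := (cube_int f).
Let ctr_comb (c : 'rV[R]_n) (x : 'rV[R]_n) := \sum_(j in A) c ord0 j * ctr (x ord0 j).

Let regular_ctr_comb c : regular (ctr_comb c).
Proof. by apply: regular_sum => j; regular_tac. Qed.

Let cube_int_ctr_comb c : cube_int (ctr_comb c) = 0.
Proof.
rewrite cube_int_sum; last by move=> j; regular_tac.
by apply: big1 => j _; rewrite cube_intZ ?cube_int_ctr ?mulr0 //; exact: regular_ctr.
Qed.

Let cube_int_ctr_combM c :
  cube_int (fun x => f x * ctr_comb c x) = \sum_(j in A) c ord0 j * cov f j.
Proof.
transitivity (cube_int (fun x => \sum_(j in A) c ord0 j * (ctr (x ord0 j) * f x))).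
  congr cube_int; apply: funext => x; rewrite /ctr_comb mulr_sumr.
  by apply: eq_bigr => j _; ring.
rewrite cube_int_sum; last by move=> j; regular_tac.
by apply: eq_bigr => j _; rewrite cube_intZ //; regular_tac.
Qed.

Let cube_int_ctr_comb2 c :
  cube_int (fun x => ctr_comb c x * ctr_comb c x) = \sum_(j in A) c ord0 j ^+ 2 / 12.
Proof.
transitivity (cube_int (fun x => \sum_(j in A) \sum_(k in A)
    (c ord0 j * c ord0 k) * (ctr (x ord0 j) * ctr (x ord0 k)))).
  congr cube_int; apply: funext => x; rewrite /ctr_comb mulr_suml; apply: eq_bigr => j _.
  by rewrite mulr_sumr; apply: eq_bigr => k _; ring.
rewrite cube_int_sum; last by move=> j; apply: regular_sum => k; regular_tac.
apply: eq_bigr => j jA; rewrite cube_int_sum; last by move=> k; regular_tac.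
rewrite (bigD1 j) //= big1 => [|k /andP[_ kj]]; last first.
  by rewrite cube_intZ ?cube_int_ctrM ?mulr0 1?eq_sym //; regular_tac.
by rewrite cube_intZ ?cube_int_ctr2; [field | regular_tac].
Qed.

Let LS_obj_expand c0 c : LS_obj f A c0 c =
    cube_int (fun x => f x * f x)
  - 2 * (c0 + \sum_(j in A) c ord0 j / 2) * m
  - 2 * \sum_(j in A) c ord0 j * cov f j
  + (c0 + \sum_(j in A) c ord0 j / 2) ^+ 2
  + \sum_(j in A) c ord0 j ^+ 2 / 12.
Proof.
set e := c0 + _; have rL := regular_ctr_comb c.
have coord_comb (x : 'rV[R]_n) :
    \sum_(j in A) c ord0 j * x ord0 j = ctr_comb c x + \sum_(j in A) c ord0 j / 2.
  by rewrite /ctr_comb -big_split /=; apply: eq_bigr => j _; rewrite /ctr; field.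
transitivity (cube_int (fun x => f x * f x + (-2 * e) * f x + (-2) * (f x * ctr_comb c x)
    + e ^+ 2 + (2 * e) * ctr_comb c x + ctr_comb c x * ctr_comb c x)).
  by congr cube_int; apply: funext => x; rewrite coord_comb /e; ring.
rewrite !cube_intD; try by regular_tac.
rewrite !cube_intZ; try by regular_tac.
by rewrite cube_int_cst cube_int_ctr_comb cube_int_ctr_combM cube_int_ctr_comb2; ring.
Qed.

Definition LS_min_value :=
  cube_int (fun x => f x * f x) - m ^+ 2 - 12 * \sum_(j in A) cov f j ^+ 2.

Lemma LS_obj_decomp c0 c : LS_obj f A c0 c = LS_min_value
  + (c0 + \sum_(j in A) c ord0 j / 2 - m) ^+ 2
  + \sum_(j in A) (c ord0 j - 12 * cov f j) ^+ 2 / 12.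
Proof.
have -> : \sum_(j in A) (c ord0 j - 12 * cov f j) ^+ 2 / 12 = \sum_(j in A) c ord0 j ^+ 2 / 12
    - 2 * \sum_(j in A) c ord0 j * cov f j + 12 * \sum_(j in A) cov f j ^+ 2.
  by rewrite !mulr_sumr -sumrB -big_split /=; apply: eq_bigr => j _; field.
by rewrite LS_obj_expand /LS_min_value; ring.
Qed.

Lemma LS_min_value_le c0 c : LS_min_value <= LS_obj f A c0 c.
Proof.
rewrite LS_obj_decomp -addrA lerDl addr_ge0 ?sqr_ge0 //.
by apply: sumr_ge0 => j _; rewrite divr_ge0 ?sqr_ge0.
Qed.

Lemma LS_obj_eq_min_valueP c0 c : LS_obj f A c0 c = LS_min_value <->
  (forall j, j \in A -> c ord0 j = 12 * cov f j) /\ c0 = m - \sum_(j in A) c ord0 j / 2.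
Proof.
rewrite LS_obj_decomp; split => [LS_eq | [c_eq ->]]; last first.
  rewrite subrK subrr expr0n /= addr0 big1 ?addr0 // => j jA.
  by rewrite c_eq // subrr expr0n mul0r.
have sq_ge0 j : 0 <= (c ord0 j - 12 * cov f j) ^+ 2 / 12 by rewrite divr_ge0 ?sqr_ge0.
have sum_ge0 : 0 <= \sum_(j in A) (c ord0 j - 12 * cov f j) ^+ 2 / 12 by exact: sumr_ge0.
have u_ge0 := sqr_ge0 (c0 + \sum_(j in A) c ord0 j / 2 - m).
have /eqP : (c0 + \sum_(j in A) c ord0 j / 2 - m) ^+ 2 = 0 by lra.
rewrite sqrf_eq0 => /eqP u0; split; last by lra.
have sum0 : \sum_(j in A) (c ord0 j - 12 * cov f j) ^+ 2 / 12 = 0 by lra.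
move=> j jA; have /eqP := psumr_eq0P (fun j _ => sq_ge0 j) sum0 jA.
by rewrite mulf_eq0 invr_eq0 pnatr_eq0 orbF sqrf_eq0 subr_eq0 => /eqP.
Qed.

Lemma LS_min_value_attained :
  exists b0 b, supported_on A b /\ LS_obj f A b0 b = LS_min_value.
Proof.
pose b := \row_(j < n) (if j \in A then 12 * cov f j else 0).
exists (m - \sum_(j in A) b ord0 j / 2), b; split.
  by move=> j /negbTE jA; rewrite mxE jA.
by apply/LS_obj_eq_min_valueP; split => // j jA; rewrite mxE jA.
Qed.

Lemma exists_LS_min : exists b0 b, is_LS_min f A b0 b.
Proof.
have [b0 [b [b_supp b_min]]] := LS_min_value_attained.
by exists b0, b; split => // c0 c _; rewrite b_min LS_min_value_le.
Qed.

Lemma is_LS_minP b0 b : is_LS_min f A b0 b <-> [/\ supported_on A b,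
  forall j, j \in A -> b ord0 j = 12 * cov f j & b0 = m - \sum_(j in A) b ord0 j / 2].
Proof.
split => [[b_supp b_min] | [b_supp b_eq b0_eq]].
  have [b0' [b' [b'_supp b'_min]]] := LS_min_value_attained.
  have /LS_obj_eq_min_valueP [] : LS_obj f A b0 b = LS_min_value.
    by apply/le_anti; rewrite LS_min_value_le -b'_min b_min.
  by split.
split => // c0 c _.
have -> : LS_obj f A b0 b = LS_min_value by exact/LS_obj_eq_min_valueP.
exact: LS_min_value_le.
Qed.

End least_squares.

End cube_integral.

Theorem lemma6 (R : realType) (p p0 : nat) (hp0 : (0 < p0)%N) (hp : (p0 < p)%N)
  (f : 'rV[R]_p -> R) (ft : 'rV[R]_p0 -> R) (eta tau : R)
  (hf : {within cube p, continuous f})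
  (hft : {within cube p0, continuous ft})
  (heta : 0 < eta)
  (hsup : sup [set `|f x - ft (proj_first (ltnW hp) x)| | x in cube p] < eta)
  (htau : 0 < tau)
  (hsig : forall j : 'I_p, (j < p0)%N ->
     tau < `|cube_int (fun x : 'rV[R]_p => x ord0 j * f x) - cube_int f / 2|) :
  forall A : {set 'I_p},
    (exists b0 b, is_LS_min f A b0 b) /\
    forall (b0 : R) (b : 'rV[R]_p), is_LS_min f A b0 b ->
      [/\ forall j, j \in A ->
            b ord0 j = 12 * (cube_int (fun x : 'rV[R]_p => x ord0 j * f x) - cube_int f / 2),
          b0 = cube_int f - \sum_(j in A) b ord0 j / 2,
          forall j, j \in A -> (j < p0)%N -> 12 * tau < `|b ord0 j|
        & forall j, j \in A -> (p0 <= j)%N -> `|b ord0 j| < 12 * eta].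
Proof.
move=> A; have rf := continuous_regular hf.
set g := fun x => ft (proj_first (ltnW hp) x).
have rg : regular g := regular_proj_first _ (continuous_regular hft).
split => [|b0 b /(is_LS_minP _ rf) [_ b_cov b0E]]; first exact: exists_LS_min.
have norm_b j : j \in A -> `|b ord0 j| = 12 * `|cov f j|.
  by move=> jA; rewrite b_cov // normrM gtr0_norm.
split => [j jA | // | j jA jp0 | j jA jp0].
- by rewrite b_cov // covE.
- by rewrite norm_b // ltr_pM2l // covE //; exact: hsig.
rewrite norm_b // ltr_pM2l // (le_lt_trans _ hsup) //; apply: (le_norm_cov_indep rf rg).
  move=> x y xy; rewrite /g; congr ft; apply/rowP => i; rewrite !mxE.
  by apply: xy; rewrite -val_eqE /= neq_ltn (leq_trans (ltn_ord i) jp0).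
by move=> x xc; apply: (le_sup_norm_cube _ xc); exact: (regularB rf rg).2.
Qed.
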